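(* Let $q$ be a power of an odd prime, $c\in\mathbb{F}_q^*$, $b\in\mathbb{F}_q$ a nonsquare, $\beta\in\mathbb{F}_{q^2}$ with $\beta^2=b$, and $f(X)=c(X^{q+1}+X^2)$ on $\mathbb{F}_{q^2}$. If $\alpha\in\mathbb{F}_{q^2}\setminus\beta\mathbb{F}_q$, where $\beta\mathbb{F}_q=\{y\beta:y\in\mathbb{F}_q\}$, then the number of $\gamma\in\mathbb{F}_{q^2}$ with $f(\gamma)=\alpha$ is either $0$ or $2$. *)

From mathcomp Require Import all_boot all_order all_algebra all_field.
Set Implicit Arguments. Unset Strict Implicit. Unset Printing Implicit Defensive.
Import GRing.Theory.
Local Open Scope ring_scope.

(* L plays the role of F_{q^2} (a finite field with q^2 elements);
   F_q is the subfield of fixed points of the Frobenius x |-> x^q. *)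
Definition inFq (q : nat) (L : finFieldType) (x : L) : bool := x ^+ q == x.

Definition fmap (q : nat) (L : finFieldType) (c x : L) : L :=
  c * (x ^+ q.+1 + x ^+ 2).

From mathcomp Require Import all_boot all_order all_algebra all_field.
From mathcomp Require Import ring.
Set Implicit Arguments. Unset Strict Implicit. Unset Printing Implicit Defensive.
Import GRing.Theory.
Local Open Scope ring_scope.

(* Writing f(x) = c x T(x) with T(x) = x + x^q the trace to F_q, two preimages
   x, y of the same alpha != 0 have a ratio t = T(x) / T(y) in F_q; then
   y = t x and T(y) = t T(x), so alpha = t^2 alpha, t = +-1 and y = +-x.
   Conversely f(-x) = f(x) since (-x)^q = -x^q, and x != -x in odd
   characteristic. *)

Definition trFq (q : nat) {R : nzSemiRingType} (x : R) : R := x + x ^+ q.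

Lemma trFqZ (q : nat) (R : comNzSemiRingType) (t x : R) :
  t ^+ q = t -> trFq q (t * x) = t * trFq q x.
Proof. by move=> tq; rewrite /trFq exprMn tq mulrDr. Qed.

Lemma two_neq0_odd_pchar (R : nzRingType) (p : nat) :
  p \in [pchar R] -> odd p -> (2 : R) != 0.
Proof.
move=> pcharR odd_p; apply/eqP => two0.
have : (p %| 2)%N by rewrite (dvdn_pcharf pcharR) two0.
rewrite dvdn_prime2 ?(pcharf_prime pcharR) // => /eqP p2.
by rewrite p2 in odd_p.
Qed.

Section FrobeniusTrace.

Variables (L : finFieldType) (q : nat).
Hypothesis pchar_q : [pchar L].-nat q.
Hypothesis exprqK : forall x : L, x ^+ q ^+ q = x.

Lemma trFq_frob (x : L) : trFq q x ^+ q = trFq q x.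
Proof. by rewrite /trFq exprDn_pchar // exprqK addrC. Qed.

Lemma fmapE (c x : L) : fmap q c x = c * x * trFq q x.
Proof. by rewrite /fmap /trFq exprS expr2; ring. Qed.

Lemma fmapN (c x : L) : fmap q c (- x) = fmap q c x.
Proof. by rewrite /fmap sqrrN exprSr exprNn_pchar // mulrNN -exprSr. Qed.

Lemma fmap_eq_opp (c x y : L) :
  c != 0 -> fmap q c x != 0 -> fmap q c y = fmap q c x -> y = x \/ y = - x.
Proof.
rewrite !fmapE => c0 fx0 fyx.
have Tx0 : trFq q x != 0 by apply: contraNneq fx0 => ->; rewrite mulr0.
have Ty0 : trFq q y != 0 by apply: contraNneq fx0 => Ty0; rewrite -fyx Ty0 mulr0.
pose t := trFq q x / trFq q y.
have tq : t ^+ q = t by rewrite /t exprMn exprVn !trFq_frob.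
have yE : y = t * x.
  apply: (mulIf Ty0); apply: (mulfI c0).
  by rewrite /t mulrA fyx; field.
have Ty : trFq q y = t * trFq q x by rewrite {1}yE trFqZ.
have t2 : t ^+ 2 = 1.
  apply: (mulIf fx0); rewrite mul1r -[RHS]fyx Ty {1}yE; ring.
move/eqP: t2; rewrite sqrf_eq1 => /orP[] /eqP t1.
  by left; rewrite yE t1 mul1r.
by right; rewrite yE t1 mulN1r.
Qed.

Lemma fmap_fiber (c x : L) : c != 0 -> fmap q c x != 0 ->
  [set y | fmap q c y == fmap q c x] = [set x; - x].
Proof.
move=> c0 fx0; apply/setP => y; rewrite !inE.
apply/eqP/orP => [/(fmap_eq_opp c0 fx0) [] -> | [] /eqP ->]; rewrite ?fmapN //.
- by left.
- by right.
Qed.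

Lemma card_fmap_fiber (c alpha : L) : (2 : L) != 0 -> c != 0 -> alpha != 0 ->
  #|[set y | fmap q c y == alpha]| = 0%N \/ #|[set y | fmap q c y == alpha]| = 2%N.
Proof.
move=> two0 c0 alpha0.
have [-> | [x]] := set_0Vmem [set y | fmap q c y == alpha]; first by left; rewrite cards0.
rewrite inE => /eqP fx; right; rewrite -fx in alpha0 *.
rewrite fmap_fiber // cards2.
have x0 : x != 0 by apply: contraNneq alpha0 => ->; rewrite fmapE mulr0 mul0r.
by rewrite -addr_eq0 -mulr2n -mulr_natr mulf_neq0.
Qed.

End FrobeniusTrace.

Theorem lemma18 (L : finFieldType) (p k q : nat)
  (hp : prime p) (hodd : odd p) (hk : (0 < k)%N) (hq : q = (p ^ k)%N)
  (hL : #|L| = (q ^ 2)%N)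
  (c b beta alpha : L)
  (hc : c != 0) (hcq : inFq q c)
  (hbq : inFq q b) (hbns : forall y : L, inFq q y -> y ^+ 2 != b)
  (hbeta : beta ^+ 2 = b)
  (halpha : forall y : L, inFq q y -> alpha != y * beta) :
  #|[set g : L | fmap q c g == alpha]| = 0%N \/
  #|[set g : L | fmap q c g == alpha]| = 2%N.
Proof.
have pcharL : p \in [pchar L] by apply: (@card_finPcharP _ _ (k * 2)); rewrite ?hL ?hq ?expnM.
have pchar_q : [pchar L].-nat q by rewrite (eq_pnat _ (pcharf_eq pcharL)) hq pnatX pnat_id.
have exprqK (x : L) : x ^+ q ^+ q = x by rewrite -exprM mulnn -hL expf_card.
have alpha0 : alpha != 0.
  by have := halpha 0; rewrite mul0r; apply; rewrite /inFq expr0n eqn0Ngt hq expn_gt0 prime_gt0.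
exact: (card_fmap_fiber pchar_q exprqK (two_neq0_odd_pchar pcharL hodd) hc alpha0).
Qed.
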